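(* Let $(A_1,X_1)$ and $(A_2,X_2)$ be two graphs (with $n_1$ and $n_2$ nodes) that cannot be distinguished by the 1-WL algorithm. Consider a DiffPool pooling layer with $c$ clusters, $S = \mathrm{gnn}_c(A,X)\in\mathbb{R}^{n\times c}$, $H=\mathrm{gnn}_r(A,X)$, where $\mathrm{gnn}_c$ and $\mathrm{gnn}_r$ are 1-WL-bounded GNNs, and whose outputs are the coarsened adjacency matrix $S^\top A S$ and the pooled features $S^\top H$ (the paper writes the layer output as $H' = S^\top A S\, S^\top H$). Then $S_1^\top A_1 S_1 = S_2^\top A_2 S_2$ and $S_1^\top H_1 = S_2^\top H_2$ (hence also $S_1^\top A_1 S_1 S_1^\top H_1 = S_2^\top A_2 S_2 S_2^\top H_2$). Consequently, any DiffPool network consisting of such pooling layers (with intermediate GNN layers) followed by a permutation-invariant readout computes the same vector representation for the two graphs.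
   Context: A graph with $n$ nodes is given by an adjacency matrix $A\in\{0,1\}^{n\times n}$ (symmetric) and node features $X\in\mathbb{R}^{n\times d}$. The 1-WL (color refinement) algorithm starts from initial colors given by node features and iteratively recolors each node by the pair (its current color, multiset of current colors of its neighbors) until the partition is stable. Two graphs ''cannot be distinguished by the 1-WL algorithm'' means: running 1-WL on their disjoint union, every stable color class contains the same number of nodes from each graph. A node-level map $f$, $(A,X)\mapsto f(A,X)\in\mathbb{R}^{n\times d'}$, is called 1-WL-bounded if the representation it assigns to a node depends only on the node's stable 1-WL color (computed on the disjoint union of any graphs under consideration); standard message-passing GNNs (e.g. GIN, GCN) are of this type, and row-wise functions such as a row-wise softmax of such outputs remain of this type. *)

From HB Require Import structures.
From mathcomp Require Import all_boot all_order all_algebra.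
From mathcomp Require Import boolp reals.
Set Implicit Arguments. Unset Strict Implicit. Unset Printing Implicit Defensive.
Import Order.TTheory GRing.Theory Num.Theory.
Local Open Scope ring_scope.

Section WL.
Variable R : realType.

Definition is_adj (n : nat) (A : 'M[R]_n) : Prop :=
  forall i j : 'I_n, A i j = A j i /\ (A i j = 0 \/ A i j = 1).

(* wl A X k u v : nodes u and v have the same color after k rounds of 1-WL
   (color refinement) started from the node features X.  Colors are
   represented by the induced equivalence relation.  Round k+1: same color at
   round k, and for every round-k color class (represented by w) u and v have
   the same number of neighbours in that class (= equal multisets of
   neighbour colors). *)
Fixpoint wl (n d : nat) (A : 'M[R]_n) (X : 'M[R]_(n, d)) (k : nat)
  (u v : 'I_n) {struct k} : bool :=
  match k with
  | 0 => row u X == row v X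
  | k'.+1 => wl A X k' u v &&
      [forall w : 'I_n,
         #|[set x : 'I_n | (A u x == 1) && wl A X k' x w]|
         == #|[set x : 'I_n | (A v x == 1) && wl A X k' x w]|]
  end.

(* Same stable 1-WL color: same color at every round (the refinement is
   decreasing and stabilizes, so this is the stable partition). *)
Definition wl_stable (n d : nat) (A : 'M[R]_n) (X : 'M[R]_(n, d)) (u v : 'I_n)
  : Prop := forall k, wl A X k u v.

Definition union_adj n1 n2 (A1 : 'M[R]_n1) (A2 : 'M[R]_n2) : 'M[R]_(n1 + n2) :=
  block_mx A1 0 0 A2.
Definition union_feat n1 n2 d (X1 : 'M[R]_(n1, d)) (X2 : 'M[R]_(n2, d))
  : 'M[R]_(n1 + n2, d) := col_mx X1 X2.

(* The two graphs cannot be distinguished by 1-WL: every stable color class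
   of the disjoint union contains equally many nodes of each graph. *)
Definition wl_indist n1 n2 d (A1 : 'M[R]_n1) (X1 : 'M[R]_(n1, d))
  (A2 : 'M[R]_n2) (X2 : 'M[R]_(n2, d)) : Prop :=
  forall u : 'I_(n1 + n2),
    #|[set i : 'I_n1 | `[< wl_stable (union_adj A1 A2) (union_feat X1 X2)
                                      (lshift n2 i) u >]]|
    = #|[set j : 'I_n2 | `[< wl_stable (union_adj A1 A2) (union_feat X1 X2)
                                      (rshift n1 j) u >]]|.

Definition wl_bounded d d' (f : forall n, 'M[R]_n -> 'M[R]_(n, d) -> 'M[R]_(n, d'))
  : Prop :=
  forall n1 n2 (A1 : 'M[R]_n1) (X1 : 'M[R]_(n1, d)) (A2 : 'M[R]_n2)
         (X2 : 'M[R]_(n2, d)),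
    is_adj A1 -> is_adj A2 ->
    forall u v : 'I_(n1 + n2),
      wl_stable (union_adj A1 A2) (union_feat X1 X2) u v ->
      row u (col_mx (f n1 A1 X1) (f n2 A2 X2))
      = row v (col_mx (f n1 A1 X1) (f n2 A2 X2)).

End WL.

(* Let E be the stable 1-WL colouring of the disjoint union of the two graphs.
   The argument rests on one counting principle: if F is constant on the
   classes of an equivalence relation, a sum of F over a finite family depends
   only on how many members of the family fall into each class
   ([sum_eq_of_class_counts]).  Applied twice it gives:
   - neighbourhood sums of colour-invariant quantities are colour-invariant,
     since same-coloured nodes see equally many neighbours of each colour at
     the round where the colouring has stabilised ([same_color_round]);
     hence multiplying a colour-invariant node matrix by the adjacency matrix
     keeps it colour-invariant ([adj_mul_color_invariant]);
   - for 1-WL-indistinguishable graphs each colour class has equally many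
     nodes from either graph, so for colour-invariant node matrices
     [col_mx M1 M2], [col_mx N1 N2] we get M1^T N1 = M2^T N2 ([indist_pool]).
   The theorem takes M = S and N = H, resp. N = A S, for the two equalities;
   the others are rewrites. *)

From HB Require Import structures.
From mathcomp Require Import all_boot all_order all_algebra.
From mathcomp Require Import boolp reals.
Import Order.TTheory GRing.Theory Num.Theory.
Local Open Scope ring_scope.
Set Implicit Arguments. Unset Strict Implicit.

Section ClassSums.
Variables (K : numFieldType) (I : finType) (E : rel I).
Hypotheses (E_refl : reflexive E) (E_sym : symmetric E) (E_trans : transitive E).

Let csize (w : I) : K := #|[set y | E y w]|%:R.

Lemma class_decomp (F : I -> K) :
  (forall x y, E x y -> F x = F y) ->
  forall x, F x = \sum_w (E x w)%:R * (F w / csize w).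
Proof.
move=> F_inv x.
have same_class w : E x w -> [set y | E y w] = [set y | E y x].
  move=> Exw; apply/setP => y; rewrite !inE.
  apply/idP/idP => Ey; first by apply: E_trans Ey _; rewrite E_sym.
  exact: E_trans Ey Exw.
have class_x : \sum_w ((E x w)%:R : K) = csize x.
  rewrite /csize -natr_sum -sum1_card [in RHS]big_mkcond /=.
  by congr _%:R; apply: eq_bigr => w _; rewrite inE E_sym; case: (E w x).
have csize_x : csize x != 0.
  rewrite pnatr_eq0 -lt0n card_gt0; apply/set0Pn; exists x; by rewrite inE.
rewrite (eq_bigr (fun w => (E x w)%:R * (F x / csize x))); last first.
  move=> w _; case Exw: (E x w); last by rewrite !mul0r.
  by rewrite -(F_inv _ _ Exw) /csize (same_class _ Exw).
by rewrite -big_distrl /= class_x mulrCA mulfV ?mulr1.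
Qed.

Lemma sum_by_classes (F : I -> K) (J : finType) (f : J -> I) (P : pred J) :
  (forall x y, E x y -> F x = F y) ->
  \sum_(j | P j) F (f j)
  = \sum_w #|[set j | P j && E (f j) w]|%:R * (F w / csize w).
Proof.
move=> F_inv.
under eq_bigr => j _ do rewrite (class_decomp F_inv (f j)).
rewrite exchange_big /=; apply: eq_bigr => w _.
rewrite -big_distrl /= -sum1_card natr_sum big_mkcond [in RHS]big_mkcond /=.
by congr (_ * _); apply: eq_bigr => j _; rewrite inE; case: (P j); case: (E _ w).
Qed.

Lemma sum_eq_of_class_counts (F : I -> K) (J1 J2 : finType)
    (f1 : J1 -> I) (f2 : J2 -> I) (P1 : pred J1) (P2 : pred J2) :
  (forall x y, E x y -> F x = F y) ->
  (forall w, #|[set j | P1 j && E (f1 j) w]| = #|[set j | P2 j && E (f2 j) w]|) ->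
  \sum_(j | P1 j) F (f1 j) = \sum_(j | P2 j) F (f2 j).
Proof.
move=> F_inv counts; rewrite !sum_by_classes //.
by apply: eq_bigr => w _; rewrite counts.
Qed.

End ClassSums.

Section Colors.
Variables (R : realType) (n d : nat) (A : 'M[R]_n) (X : 'M[R]_(n, d)).

Lemma wl_refl k : reflexive (wl A X k).
Proof.
move=> u; elim: k => [|k IH] /=; first exact: eqxx.
by rewrite IH; apply/forallP => w.
Qed.

Lemma wl_sym k : symmetric (wl A X k).
Proof.
elim: k => [|k IH] u v /=; first exact: eq_sym.
rewrite IH; congr (_ && _).
by apply/forallP/forallP => counts w; rewrite eq_sym; apply: counts.
Qed.

Lemma wl_trans k : transitive (wl A X k).
Proof.
elim: k => [|k IH] v u w /=; first by move=> /eqP->.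
move=> /andP[uv /forallP cuv] /andP[vw /forallP cvw].
rewrite (IH _ _ _ uv vw); apply/forallP => z.
by rewrite (eqP (cuv z)) cvw.
Qed.

Lemma wl_mono m k u v : (m <= k)%N -> wl A X k u v -> wl A X m u v.
Proof.
move=> /subnKC <-; elim: (k - m)%N => [|p IH]; first by rewrite addn0.
by rewrite addnS => /andP[/IH].
Qed.

Definition same_color (u v : 'I_n) : bool := `[< wl_stable A X u v >].

Lemma same_color_refl : reflexive same_color.
Proof. by move=> u; apply/asboolP => k; apply: wl_refl. Qed.

Lemma same_color_sym : symmetric same_color.
Proof.
by move=> u v; apply/asboolP/asboolP => h k; rewrite wl_sym; apply: h.
Qed.

Lemma same_color_trans : transitive same_color.
Proof.
move=> v u w /asboolP uv /asboolP vw; apply/asboolP => k.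
exact: wl_trans (uv k) (vw k).
Qed.

(* The refinement stabilises: at a round where the number of same-coloured
   pairs is minimal, the colouring already equals the stable one. *)
Lemma same_color_round : exists K, forall u v, same_color u v = wl A X K u v.
Proof.
pose pairs k := [set p : 'I_n * 'I_n | wl A X k p.1 p.2].
have pairs_mono m k : (m <= k)%N -> pairs k \subset pairs m.
  by move=> mk; apply/subsetP => p; rewrite !inE; apply: wl_mono.
pose attained m := `[< exists k, #|pairs k| = m >].
have some_attained : exists m, attained m.
  by exists #|pairs 0%N|; apply/asboolP; exists 0%N.
case: (ex_minnP some_attained) => m /asboolP[K cardK] m_min.
have later k : (K <= k)%N -> pairs k = pairs K.
  move=> Kk; apply/eqP; rewrite eqEcard pairs_mono //= cardK.
  by apply: m_min; apply/asboolP; exists k.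
exists K => u v; apply/asboolP/idP => [|uvK k]; first exact.
case: (leqP k K) => [kK|/ltnW Kk]; first exact: wl_mono uvK.
by have /setP/(_ (u, v)) := later k Kk; rewrite !inE => ->.
Qed.

Lemma neighbour_sum_invariant (T : 'I_n -> R) :
  (forall x y, same_color x y -> T x = T y) ->
  forall u v, same_color u v ->
  \sum_(x | A u x == 1) T x = \sum_(x | A v x == 1) T x.
Proof.
move=> T_inv u v /asboolP uv.
have [K colorK] := same_color_round.
apply: (sum_eq_of_class_counts same_color_refl same_color_sym same_color_trans
          T_inv (f1 := id) (f2 := id)) => w.
have at_round a : #|[set x | (A a x == 1) && same_color x w]|
                  = #|[set x | (A a x == 1) && wl A X K x w]|.
  by apply: eq_card => x; rewrite !inE colorK.
have /andP[_ /forallP counts] := uv K.+1.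
by rewrite /= !at_round; apply/eqP/counts.
Qed.

Definition color_invariant p (M : 'M[R]_(n, p)) : Prop :=
  forall u v, wl_stable A X u v -> row u M = row v M.

Lemma color_invariant_entry p (M : 'M[R]_(n, p)) b :
  color_invariant M -> forall x y, same_color x y -> M x b = M y b.
Proof.
move=> M_inv x y /asboolP xy.
by have := congr1 (fun r : 'rV_p => r 0 b) (M_inv x y xy); rewrite !mxE.
Qed.

Lemma adj_mul_color_invariant p (M : 'M[R]_(n, p)) :
  (forall i j, A i j = 0 \/ A i j = 1) ->
  color_invariant M -> color_invariant (A *m M).
Proof.
move=> A01 M_inv u v uv; apply/rowP => b; rewrite !mxE.
have nbr_sum a : \sum_x A a x * M x b = \sum_(x | A a x == 1) M x b.
  rewrite [RHS]big_mkcond; apply: eq_bigr => x _.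
  by case: (A01 a x) => ->; rewrite ?eqxx ?mul1r // eq_sym oner_eq0 mul0r.
rewrite !nbr_sum; apply: neighbour_sum_invariant; last exact/asboolP.
exact: color_invariant_entry.
Qed.

End Colors.

Section DisjointUnion.
Variables (R : realType) (n1 n2 d : nat).
Variables (A1 : 'M[R]_n1) (X1 : 'M[R]_(n1, d)) (A2 : 'M[R]_n2) (X2 : 'M[R]_(n2, d)).

Let U := union_adj A1 A2.
Let XU := union_feat X1 X2.

Lemma union_adj01 :
  is_adj A1 -> is_adj A2 -> forall i j, U i j = 0 \/ U i j = 1.
Proof.
move=> adj1 adj2 i j; rewrite /U /union_adj.
case: (split_ordP i) => i' ->; case: (split_ordP j) => j' ->;
  rewrite ?block_mxEul ?block_mxEur ?block_mxEdl ?block_mxEdr ?mxE;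
  by [left | exact: (adj1 i' j').2 | exact: (adj2 i' j').2].
Qed.

Lemma indist_pool p q (M1 : 'M[R]_(n1, p)) (M2 : 'M[R]_(n2, p))
    (N1 : 'M[R]_(n1, q)) (N2 : 'M[R]_(n2, q)) :
  wl_indist A1 X1 A2 X2 ->
  color_invariant U XU (col_mx M1 M2) -> color_invariant U XU (col_mx N1 N2) ->
  M1^T *m N1 = M2^T *m N2.
Proof.
move=> indist M_inv N_inv; apply/matrixP => a b; rewrite !mxE.
pose F x := col_mx M1 M2 x a * col_mx N1 N2 x b.
have F_inv x y : same_color U XU x y -> F x = F y.
  by move=> xy; rewrite /F (color_invariant_entry a M_inv xy)
                          (color_invariant_entry b N_inv xy).
transitivity (\sum_i F (lshift n2 i)).
  by apply: eq_bigr => i _; rewrite /F !col_mxEu mxE.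
transitivity (\sum_j F (rshift n1 j)); last first.
  by apply: eq_bigr => j _; rewrite /F !col_mxEd mxE.
apply: (sum_eq_of_class_counts (same_color_refl U XU) (same_color_sym U XU)
          (@same_color_trans _ _ _ U XU) F_inv (P1 := xpredT) (P2 := xpredT)) => w.
rewrite (eq_card (B := [set i | `[< wl_stable U XU (lshift n2 i) w >]]));
  last by move=> i; rewrite !inE.
rewrite (indist w); apply: eq_card => j; by rewrite !inE.
Qed.

End DisjointUnion.

Theorem theorem1 (R : realType) (d c d' : nat)
  (gnn_c : forall n, 'M[R]_n -> 'M[R]_(n, d) -> 'M[R]_(n, c))
  (gnn_r : forall n, 'M[R]_n -> 'M[R]_(n, d) -> 'M[R]_(n, d'))
  (n1 n2 : nat) (A1 : 'M[R]_n1) (X1 : 'M[R]_(n1, d))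
  (A2 : 'M[R]_n2) (X2 : 'M[R]_(n2, d)) :
  is_adj A1 -> is_adj A2 ->
  wl_indist A1 X1 A2 X2 ->
  wl_bounded gnn_c -> wl_bounded gnn_r ->
  let S1 := gnn_c n1 A1 X1 in let H1 := gnn_r n1 A1 X1 in
  let S2 := gnn_c n2 A2 X2 in let H2 := gnn_r n2 A2 X2 in
  [/\ S1^T *m A1 *m S1 = S2^T *m A2 *m S2,
      S1^T *m H1 = S2^T *m H2,
      S1^T *m A1 *m S1 *m (S1^T *m H1) = S2^T *m A2 *m S2 *m (S2^T *m H2)
    & forall (m : nat) (net : 'M[R]_c -> 'M[R]_(c, d') -> 'rV[R]_m),
        net (S1^T *m A1 *m S1) (S1^T *m H1)
        = net (S2^T *m A2 *m S2) (S2^T *m H2)].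
Proof.
move=> adj1 adj2 indist bounded_c bounded_r S1 H1 S2 H2.
have S_inv := bounded_c _ _ A1 X1 A2 X2 adj1 adj2.
have H_inv := bounded_r _ _ A1 X1 A2 X2 adj1 adj2.
have AS_inv : color_invariant (union_adj A1 A2) (union_feat X1 X2)
                (col_mx (A1 *m S1) (A2 *m S2)).
  have := adj_mul_color_invariant (union_adj01 adj1 adj2) S_inv.
  by rewrite /union_adj mul_block_col !mul0mx addr0 add0r.
have coarse : S1^T *m A1 *m S1 = S2^T *m A2 *m S2.
  by rewrite -!mulmxA; apply: indist_pool indist S_inv AS_inv.
have pooled : S1^T *m H1 = S2^T *m H2 by apply: indist_pool indist S_inv H_inv.
by split => [||| m net]; rewrite ?coarse ?pooled.
Qed.
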